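(* Let $A=(a_{n,k})$ be a real matrix with $a_{n,k}\ge0$ and $\sum_{k=0}^\infty a_{n,k}=1$ for every $n$, let $r\in\mathbb{N}$, $n\ge0$, and let $t\in\mathbb{R}$ with $t\neq\frac{2l\pi}{r}$ for all $l\in\mathbb{Z}$. Then $$\left|\sum_{k=0}^{\infty}a_{n,k}\widetilde{D^{\circ}}_{k,1}(t)\right|\le\frac{1}{2\left|\sin\frac t2\sin\frac{rt}2\right|}\left(A_{n,r}+\sum_{k=0}^{r-1}a_{n,k}\right)\le\frac{1}{\left|\sin\frac t2\sin\frac{rt}2\right|}A_{n,r}.$$
   Context: $\widetilde{D^{\circ}}_{k,1}(t)=\dfrac{\cos\frac{(2k+1)t}{2}}{2\sin\frac t2}$ and $A_{n,r}=\sum_{k=0}^\infty|a_{n,k}-a_{n,k+r}|$. *)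

From Stdlib Require Import Reals.
From Coquelicot Require Import Coquelicot.
Open Scope R_scope.

Definition Dconj (k : nat) (t : R) : R :=
  cos ((2 * INR k + 1) * t / 2) / (2 * sin (t / 2)).

Definition A_nr (a : nat -> nat -> R) (n r : nat) : R :=
  Series (fun k => Rabs (a n k - a n (k + r)%nat)).

(** Writing [phi j = sin ((2j + 1 - r) t / 2)], the product formula gives
    [2 sin (rt/2) cos ((2k+1) t/2) = phi (k + r) - phi k], so the conjugate
    kernel telescopes with step [r].  Summation by parts moves the difference
    onto the coefficients: the series becomes
    [sum_k (a_k - a_(k+r)) phi (k+r) - sum_(k<r) a_k phi k], which is at most
    [A_(n,r) + sum_(k<r) a_k] in absolute value.  The second inequality holds
    because [sum_(k<r) a_k = sum_k (a_k - a_(k+r)) <= A_(n,r)]. *)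

From Stdlib Require Import Reals Lra Lia.
From Coquelicot Require Import Coquelicot.
Open Scope R_scope.

Lemma Rabs_mult_le_l (x y : R) : Rabs y <= 1 -> Rabs (x * y) <= Rabs x.
Proof.
  intros Hy. rewrite Rabs_mult. rewrite <- (Rmult_1_r (Rabs x)) at 2.
  apply Rmult_le_compat_l; auto using Rabs_pos.
Qed.

Section ShiftedSeries.

Variables (v : nat -> R) (m : nat).
Hypothesis m_gt0 : (0 < m)%nat.
Hypothesis v_abs_summable : ex_series (fun k => Rabs (v k)).

Lemma ex_series_shift (w : nat -> R) :
  ex_series w -> ex_series (fun k => w (k + m)%nat).
Proof.
  intros Hw. apply (ex_series_incr_n w m) in Hw.
  apply (ex_series_ext (fun k => w (m + k)%nat)); auto.
  intros k. f_equal. lia.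
Qed.

Lemma Series_split_shift (w : nat -> R) :
  ex_series w -> Series w = sum_n w (m - 1) + Series (fun k => w (k + m)%nat).
Proof.
  intros Hw. rewrite (Series_incr_n w m m_gt0 Hw), sum_n_Reals.
  replace (Init.Nat.pred m) with (m - 1)%nat by lia.
  f_equal. apply Series_ext. intros k. f_equal. lia.
Qed.

Lemma ex_series_Rabs_mul_bounded (g : nat -> R) (M : R) :
  (forall k, Rabs (g k) <= M) -> ex_series (fun k => Rabs (v k * g k)).
Proof.
  intros Hg.
  apply (ex_series_le (fun k => Rabs (v k * g k)) (fun k => M * Rabs (v k))).
  - intros k. change (norm ?x) with (Rabs x).
    rewrite Rabs_Rabsolu, Rabs_mult, Rmult_comm.
    apply Rmult_le_compat_r; [apply Rabs_pos | apply Hg].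
  - exact (ex_series_scal_l M _ v_abs_summable).
Qed.

Lemma ex_series_mul_bounded (g : nat -> R) (M : R) :
  (forall k, Rabs (g k) <= M) -> ex_series (fun k => v k * g k).
Proof.
  intros Hg. apply ex_series_Rabs. now apply ex_series_Rabs_mul_bounded with M.
Qed.

Lemma ex_series_Rabs_sub_shift :
  ex_series (fun k => Rabs (v k - v (k + m)%nat)).
Proof.
  apply (ex_series_le (fun k => Rabs (v k - v (k + m)%nat))
           (fun k => Rabs (v k) + Rabs (v (k + m)%nat))).
  - intros k. change (norm ?x) with (Rabs x).
    rewrite Rabs_Rabsolu, <- (Rabs_Ropp (v (k + m)%nat)). apply Rabs_triang.
  - exact (ex_series_plus _ _ v_abs_summable
             (ex_series_shift (fun k => Rabs (v k)) v_abs_summable)).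
Qed.

Lemma sum_n_le_Series_Rabs_sub_shift :
  sum_n v (m - 1) <= Series (fun k => Rabs (v k - v (k + m)%nat)).
Proof.
  assert (Hv : ex_series v) by now apply ex_series_Rabs.
  replace (sum_n v (m - 1)) with (Series (fun k => v k - v (k + m)%nat)).
  - eapply Rle_trans; [apply Rle_abs |].
    apply Series_Rabs, ex_series_Rabs_sub_shift.
  - rewrite Series_minus, (Series_split_shift v Hv); auto using ex_series_shift.
    ring.
Qed.

Lemma Series_mul_sub_shift (g : nat -> R) (M : R) :
  (forall k, Rabs (g k) <= M) ->
  Series (fun k => v k * (g (k + m)%nat - g k))
  = Series (fun k => (v k - v (k + m)%nat) * g (k + m)%nat)
    - sum_n (fun k => v k * g k) (m - 1).
Proof.
  intros Hg.
  set (w := fun k => v k * g k).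
  assert (Hw : ex_series w) by now apply ex_series_mul_bounded with M.
  assert (Hvg : ex_series (fun k => v k * g (k + m)%nat))
    by now apply ex_series_mul_bounded with M.
  rewrite (Series_ext _ (fun k => v k * g (k + m)%nat - w k))
    by (intros; unfold w; ring).
  rewrite (Series_ext (fun k => (v k - v (k + m)%nat) * g (k + m)%nat)
             (fun k => v k * g (k + m)%nat - w (k + m)%nat))
    by (intros; unfold w; ring).
  rewrite !Series_minus, (Series_split_shift w Hw); auto using ex_series_shift.
  ring.
Qed.

Lemma Rabs_Series_mul_sub_shift_le (g : nat -> R) :
  (forall k, Rabs (g k) <= 1) ->
  Rabs (Series (fun k => v k * (g (k + m)%nat - g k)))
  <= Series (fun k => Rabs (v k - v (k + m)%nat))
     + sum_n (fun k => Rabs (v k)) (m - 1).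
Proof.
  intros Hg. rewrite (Series_mul_sub_shift g 1 Hg).
  eapply Rle_trans; [apply Rabs_triang |]. rewrite Rabs_Ropp.
  apply Rplus_le_compat.
  - assert (Hle : forall k, Rabs ((v k - v (k + m)%nat) * g (k + m)%nat)
                             <= Rabs (v k - v (k + m)%nat)).
    { intros k. now apply Rabs_mult_le_l. }
    eapply Rle_trans.
    + apply Series_Rabs.
      apply (ex_series_le (fun k => Rabs ((v k - v (k + m)%nat) * g (k + m)%nat))
               (fun k => Rabs (v k - v (k + m)%nat))).
      * intros k. change (norm ?x) with (Rabs x). rewrite Rabs_Rabsolu. apply Hle.
      * apply ex_series_Rabs_sub_shift.
    + apply Series_le; [|apply ex_series_Rabs_sub_shift].
      intros k. split; [apply Rabs_pos | apply Hle].
  - rewrite !sum_n_Reals. eapply Rle_trans; [apply Rsum_abs |].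
    apply sum_Rle. intros k _. now apply Rabs_mult_le_l.
Qed.

End ShiftedSeries.

Definition conj_phase (r : nat) (t : R) (j : nat) : R :=
  sin ((2 * INR j + 1 - INR r) * t / 2).

Lemma conj_phase_telescoping (r k : nat) (t : R) :
  2 * sin (INR r * t / 2) * cos ((2 * INR k + 1) * t / 2)
  = conj_phase r t (k + r) - conj_phase r t k.
Proof.
  unfold conj_phase. rewrite form4, plus_INR.
  replace (((2 * (INR k + INR r) + 1 - INR r) * t / 2
            + (2 * INR k + 1 - INR r) * t / 2) / 2)
    with ((2 * INR k + 1) * t / 2) by field.
  replace (((2 * (INR k + INR r) + 1 - INR r) * t / 2
            - (2 * INR k + 1 - INR r) * t / 2) / 2)
    with (INR r * t / 2) by field.
  ring.
Qed.

Section NonResonantAngle.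

Variables (r : nat) (t : R).
Hypothesis r_gt0 : (0 < r)%nat.
Hypothesis t_nonresonant : forall l : Z, t <> 2 * IZR l * PI / INR r.

Lemma INR_r_neq_0 : INR r <> 0.
Proof. apply not_0_INR. lia. Qed.

Lemma sin_half_neq_0 : sin (t / 2) <> 0.
Proof.
  intros Hsin. apply sin_eq_0_0 in Hsin as [l Hl].
  apply (t_nonresonant (l * Z.of_nat r)).
  rewrite mult_IZR, <- INR_IZR_INZ.
  replace t with (2 * (t / 2)) by field. rewrite Hl.
  field. apply INR_r_neq_0.
Qed.

Lemma sin_mul_half_neq_0 : sin (INR r * t / 2) <> 0.
Proof.
  intros Hsin. apply sin_eq_0_0 in Hsin as [l Hl].
  apply (t_nonresonant l).
  replace (2 * IZR l * PI) with (2 * (IZR l * PI)) by ring. rewrite <- Hl.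
  field. apply INR_r_neq_0.
Qed.

Lemma Dconj_conj_phase (k : nat) :
  Dconj k t = / (4 * (sin (t / 2) * sin (INR r * t / 2)))
              * (conj_phase r t (k + r) - conj_phase r t k).
Proof.
  rewrite <- conj_phase_telescoping. unfold Dconj.
  field. split; [apply sin_mul_half_neq_0 | apply sin_half_neq_0].
Qed.

End NonResonantAngle.

Theorem lemma5 (a : nat -> nat -> R) (r n : nat) (t : R)
  (Hnonneg : forall n k, 0 <= a n k)
  (Hrow : forall n, is_series (a n) 1)
  (Hr : (0 < r)%nat)
  (Ht : forall l : Z, t <> 2 * IZR l * PI / INR r) :
  Rabs (Series (fun k => a n k * Dconj k t))
    <= / (2 * Rabs (sin (t / 2) * sin (INR r * t / 2)))
       * (A_nr a n r + sum_n (a n) (r - 1))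
  /\ / (2 * Rabs (sin (t / 2) * sin (INR r * t / 2)))
       * (A_nr a n r + sum_n (a n) (r - 1))
     <= / Rabs (sin (t / 2) * sin (INR r * t / 2)) * A_nr a n r.
Proof.
  unfold A_nr. set (u := a n).
  set (A := Series (fun k => Rabs (u k - u (k + r)%nat))).
  set (s := sum_n u (r - 1)).
  set (p := Rabs (sin (t / 2) * sin (INR r * t / 2))).
  assert (Habs : forall k, Rabs (u k) = u k)
    by (intros k; apply Rabs_right, Rle_ge, Hnonneg).
  assert (Hu : ex_series (fun k => Rabs (u k))).
  { apply (ex_series_ext u); [intros k; now rewrite Habs | exists 1; apply Hrow]. }
  assert (Hp : 0 < p).
  { apply Rabs_pos_lt, Rmult_integral_contrapositive.
    split; [apply (sin_half_neq_0 r) | apply sin_mul_half_neq_0]; auto. }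
  assert (Hs0 : 0 <= s).
  { unfold s. rewrite sum_n_Reals. apply cond_pos_sum. intros k. apply Hnonneg. }
  assert (HsA : s <= A) by now apply sum_n_le_Series_Rabs_sub_shift.
  assert (Hseries : Series (fun k => u k * Dconj k t)
    = / (4 * (sin (t / 2) * sin (INR r * t / 2)))
      * Series (fun k => u k * (conj_phase r t (k + r) - conj_phase r t k))).
  { rewrite <- Series_scal_l. apply Series_ext. intros k.
    rewrite (Dconj_conj_phase r) by auto. ring. }
  assert (Hbound : Rabs (Series (fun k =>
             u k * (conj_phase r t (k + r) - conj_phase r t k))) <= A + s).
  { unfold s. rewrite <- (sum_n_ext _ _ _ Habs).
    apply Rabs_Series_mul_sub_shift_le; auto.
    intros k. apply Rabs_le, SIN_bound. }
  split.
  - rewrite Hseries, Rabs_mult, Rabs_inv, Rabs_mult, (Rabs_right 4) by lra.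
    fold p. apply Rle_trans with (/ (4 * p) * (A + s)).
    + apply Rmult_le_compat_l; [left; apply Rinv_0_lt_compat |]; lra.
    + apply Rmult_le_compat_r; [| apply Rinv_le_contravar]; lra.
  - replace (/ p * A) with (/ (2 * p) * (A + A)) by (field; lra).
    apply Rmult_le_compat_l; [left; apply Rinv_0_lt_compat |]; lra.
Qed.
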